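(* Let $p\in\mathcal{X}$. Then there exists a unique forkless polynomial $q\in\mathcal{X}$ such that $p\equiv q\pmod{\mathcal{J}}$.
   Context: Let $\mathbf{k}$ be a commutative ring, let $\beta,\alpha\in\mathbf{k}$, and let $n$ be a positive integer. Let $\mathcal{X}=\mathbf{k}[x_{i,j}\mid 1\le i<j\le n]$ be the polynomial ring over $\mathbf{k}$ in the indeterminates $x_{i,j}$, and $\mathfrak{M}$ the set of monomials in them. Let $\mathcal{J}$ be the ideal of $\mathcal{X}$ generated by all elements $x_{i,j}x_{j,k}-x_{i,k}(x_{i,j}+x_{j,k}+\beta)-\alpha$ for $1\le i<j<k\le n$. A monomial $\mathfrak{m}\in\mathfrak{M}$ is forkless if there is no triple $1\le i<j<k\le n$ with $x_{i,j}x_{i,k}\mid\mathfrak{m}$; a polynomial is forkless if it is a $\mathbf{k}$-linear combination of forkless monomials. *)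

From HB Require Import structures.
From mathcomp Require Import all_boot all_order all_algebra.
Set Implicit Arguments. Unset Strict Implicit. Unset Printing Implicit Defensive.
Import GRing.Theory.
Local Open Scope ring_scope.

Definition Var (n : nat) := {ij : 'I_n * 'I_n | (ij.1 < ij.2)%N}.

Definition mono (n : nat) := {ffun Var n -> nat}.
Definition mono1 n : mono n := [ffun _ => 0%N].
Definition monoM n (a b : mono n) : mono n := [ffun v => (a v + b v)%N].
(* the monomial x_{i,j} (meaningful for i < j) *)
Definition mvar n (i j : 'I_n) : mono n :=
  [ffun v : Var n => nat_of_bool (((val v).1 == i) && ((val v).2 == j))].

(* polynomials as formal finite sums of terms (coefficient, monomial);
   two representations denote the same polynomial iff they have the same
   coefficient function [coef]. *)
Definition mpoly (R : comPzRingType) (n : nat) := seq (R * mono n).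
Definition coef (R : comPzRingType) n (p : mpoly R n) (m : mono n) : R :=
  \sum_(t <- p | t.2 == m) t.1.
Definition peq (R : comPzRingType) n (p q : mpoly R n) : Prop :=
  forall m, coef p m = coef q m.

Definition pconst (R : comPzRingType) n (c : R) : mpoly R n := [:: (c, mono1 n)].
Definition pX (R : comPzRingType) n (i j : 'I_n) : mpoly R n := [:: (1, mvar i j)].
Definition padd (R : comPzRingType) n (p q : mpoly R n) : mpoly R n := p ++ q.
Definition popp (R : comPzRingType) n (p : mpoly R n) : mpoly R n :=
  [seq (- t.1, t.2) | t <- p].
Definition psub (R : comPzRingType) n (p q : mpoly R n) : mpoly R n := padd p (popp q).
Definition pmul (R : comPzRingType) n (p q : mpoly R n) : mpoly R n :=
  [seq (a.1 * b.1, monoM a.2 b.2) | a <- p, b <- q].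

Definition gen (R : comPzRingType) n (beta alpha : R) (i j k : 'I_n) : mpoly R n :=
  psub (psub (pmul (pX R i j) (pX R j k))
             (pmul (pX R i k) (padd (padd (pX R i j) (pX R j k)) (pconst n beta))))
       (pconst n alpha).

Definition inJ (R : comPzRingType) n (beta alpha : R) (f : mpoly R n) : Prop :=
  exists s : seq (mpoly R n * ('I_n * 'I_n * 'I_n)),
    (forall t, t \in s -> (t.2.1.1 < t.2.1.2 < t.2.2)%N) /\
    peq f (flatten [seq pmul t.1 (gen beta alpha t.2.1.1 t.2.1.2 t.2.2) | t <- s]).

Definition forkless_mono n (m : mono n) : Prop :=
  forall v w : Var n, (val v).1 = (val w).1 -> ((val v).2 < (val w).2)%N ->
    ~ ((0 < m v)%N /\ (0 < m w)%N).

Definition forkless (R : comPzRingType) n (q : mpoly R n) : Prop :=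
  forall m, coef q m != 0 -> forkless_mono m.

(* Orient each generator as a rewriting rule on its fork,
     x_ij x_ik  ->  x_ij x_jk - x_ik x_jk - beta x_ik - alpha     (i < j < k).
   The weight sum e_ij (n - i) of a monomial strictly decreases along the rule, so
   reducing forks terminates in a forkless normal form pnf p with p - pnf p in J.
   By Bergman's diamond lemma, proved here by induction on the weight, pnf does not
   depend on the forks chosen once the minimal ambiguities resolve: two forks in
   disjoint variables, and two of the forks (i,a,b), (i,a,c), (i,b,c) overlapping in
   x_ia x_ib x_ic. Then pnf kills J and fixes forkless polynomials, which gives
   uniqueness. Polynomials, being lists of terms, are compared through the linear
   functionals p |-> sum c F(m) for arbitrary F : mono n -> R. *)

From HB Require Import structures.
From mathcomp Require Import all_boot all_order all_algebra.
From mathcomp Require Import zify ring.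
Set Implicit Arguments. Unset Strict Implicit. Unset Printing Implicit Defensive.
Import GRing.Theory.
Local Open Scope ring_scope.

Section Monomials.
Variable n : nat.
Implicit Types (a b u m : mono n).

Lemma monoMC a b : monoM a b = monoM b a.
Proof. by apply/ffunP => v; rewrite !ffunE addnC. Qed.

Lemma monoMA a b u : monoM a (monoM b u) = monoM (monoM a b) u.
Proof. by apply/ffunP => v; rewrite !ffunE addnA. Qed.

Lemma monoM1 a : monoM a (mono1 n) = a.
Proof. by apply/ffunP => v; rewrite !ffunE addn0. Qed.

Lemma mono1M a : monoM (mono1 n) a = a.
Proof. by apply/ffunP => v; rewrite !ffunE add0n. Qed.

Lemma mvarE (i j : 'I_n) (v : Var n) :
  mvar i j v = ((val v).1 == i) && ((val v).2 == j).
Proof. by rewrite ffunE. Qed.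

Lemma mvar_le1 (i j : 'I_n) v : (mvar i j v <= 1)%N.
Proof. by rewrite mvarE; case: (_ && _). Qed.

Lemma mvar_disjoint (i j i' j' : 'I_n) v : ~ (i = i' :> nat /\ j = j' :> nat) ->
  (mvar i j v + mvar i' j' v <= 1)%N.
Proof.
move=> ne; rewrite !mvarE.
case: eqP => [e1|]; case: eqP => [e2|]; case: eqP => [e3|]; case: eqP => [e4|] //.
by case: ne; rewrite -e1 -e2 -e3 -e4.
Qed.

Lemma Var_eq (v w : Var n) : (val v).1 = (val w).1 -> (val v).2 = (val w).2 -> v = w.
Proof. by move=> e1 e2; apply: val_inj; rewrite [val v]surjective_pairing e1 e2 -surjective_pairing. Qed.

Definition mweight m : nat := \sum_(v : Var n) m v * (n - (val v).1).

Lemma mweightM a b : mweight (monoM a b) = (mweight a + mweight b)%N.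
Proof. by rewrite /mweight -big_split; apply: eq_bigr => v _; rewrite ffunE mulnDl. Qed.

Lemma mweight1 : mweight (mono1 n) = 0%N.
Proof. by rewrite /mweight big1 // => v _; rewrite ffunE. Qed.

Lemma mweight_mvar (i j : 'I_n) : (i < j)%N -> mweight (mvar i j) = (n - i)%N.
Proof.
move=> ltij; rewrite /mweight (bigD1 (exist _ (i, j) ltij : Var n)) //= big1 ?addn0.
  by rewrite mvarE /= !eqxx mul1n.
move=> v /eqP neq; rewrite mvarE.
by case: eqP => [e1|//]; case: eqP => [e2|//]; case: neq; apply: Var_eq.
Qed.

Definition mdvd a m := [forall v, a v <= m v]%N.
Definition mdiv m a : mono n := [ffun v => m v - a v]%N.

Lemma mdivK a m : mdvd a m -> monoM (mdiv m a) a = m.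
Proof. by move/forallP=> le_am; apply/ffunP => v; rewrite !ffunE subnK. Qed.

Lemma mdiv_monoM u a : mdiv (monoM u a) a = u.
Proof. by apply/ffunP => v; rewrite !ffunE addnK. Qed.

Lemma mdvd_monoM u a : mdvd a (monoM u a).
Proof. by apply/forallP => v; rewrite ffunE leq_addl. Qed.

End Monomials.

Section Pairing.
Variables (R : comPzRingType) (n : nat).
Implicit Types (p q f g h : mpoly R n) (F G : mono n -> R).

Definition pdot F p : R := \sum_(t <- p) t.1 * F t.2.

Lemma pdot_nil F : pdot F [::] = 0.
Proof. by rewrite /pdot big_nil. Qed.

Lemma pdot_cons F t p : pdot F (t :: p) = t.1 * F t.2 + pdot F p.
Proof. by rewrite /pdot big_cons. Qed.

Lemma pdot_cat F p q : pdot F (p ++ q) = pdot F p + pdot F q.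
Proof. by rewrite /pdot big_cat. Qed.

Lemma pdot_popp F p : pdot F (popp p) = - pdot F p.
Proof. by rewrite /pdot big_map -sumrN; apply: eq_bigr => t _; rewrite mulNr. Qed.

Lemma pdot_psub F p q : pdot F (psub p q) = pdot F p - pdot F q.
Proof. by rewrite pdot_cat pdot_popp. Qed.

Lemma pdot_flatten F (ps : seq (mpoly R n)) :
  pdot F (flatten ps) = \sum_(p <- ps) pdot F p.
Proof. by rewrite /pdot big_flatten. Qed.

Lemma eq_pdot F G p : F =1 G -> pdot F p = pdot G p.
Proof. by move=> eFG; apply: eq_bigr => t _; rewrite eFG. Qed.

Lemma pdot_sum (I : Type) (s : seq I) (G : mono n -> I -> R) p :
  pdot (fun u => \sum_(x <- s) G u x) p = \sum_(x <- s) pdot (G^~ x) p.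
Proof. by rewrite /pdot exchange_big; apply: eq_bigr => t _; rewrite mulr_sumr. Qed.

Lemma pdot_pmul F p q :
  pdot F (pmul p q) = pdot (fun u => pdot (fun v => F (monoM u v)) q) p.
Proof.
rewrite /pdot big_allpairs_dep; apply: eq_bigr => a _.
by rewrite mulr_sumr; apply: eq_bigr => b _; rewrite mulrA.
Qed.

Lemma pdot_pmul1 F c u q :
  pdot F (pmul [:: (c, u)] q) = c * pdot (fun v => F (monoM u v)) q.
Proof. by rewrite pdot_pmul pdot_cons pdot_nil addr0. Qed.

Lemma coef_pdot p m : coef p m = pdot (fun u => (u == m)%:R) p.
Proof.
rewrite /coef /pdot big_mkcond; apply: eq_bigr => t _.
by case: (t.2 == m); rewrite ?mulr1 ?mulr0.
Qed.

Lemma pdot_coef F p : pdot F p = \sum_(u <- undup (map snd p)) coef p u * F u.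
Proof.
transitivity (\sum_(u <- undup (map snd p))
                \sum_(t <- p) (if t.2 == u then t.1 * F t.2 else 0)).
  rewrite exchange_big; apply: eq_big_seq => t tp.
  rewrite (bigD1_seq t.2) /= ?undup_uniq ?mem_undup ?map_f // eqxx.
  by rewrite big1 ?addr0 // => u /negbTE; rewrite eq_sym => ->.
apply: eq_bigr => u _; rewrite /coef [in RHS]big_mkcond mulr_suml.
apply: eq_bigr => t _.
by case: eqP => [->|_]; rewrite ?mul0r.
Qed.

Lemma peq_pdot p q : peq p q <-> forall F, pdot F p = pdot F q.
Proof.
split=> [epq F|epq m]; last by rewrite !coef_pdot.
apply/eqP; rewrite -subr_eq0 -pdot_psub pdot_coef big1 // => u _.
by rewrite !coef_pdot pdot_psub -!coef_pdot epq subrr mul0r.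
Qed.

Lemma pdot_peq F p q : peq p q -> pdot F p = pdot F q.
Proof. by move/peq_pdot. Qed.

Lemma peq_sym p q : peq p q -> peq q p.
Proof. by move=> epq m. Qed.

Lemma peq_trans q p r : peq p q -> peq q r -> peq p r.
Proof. by move=> epq eqr m; rewrite epq. Qed.

Lemma pdotN F p : pdot (fun u => - F u) p = - pdot F p.
Proof. by rewrite /pdot -sumrN; apply: eq_bigr => t _; rewrite mulrN. Qed.

Lemma pdot_pmulA F h f g : pdot F (pmul h (pmul f g)) = pdot F (pmul (pmul h f) g).
Proof.
rewrite !pdot_pmul; apply: eq_pdot => u; rewrite pdot_pmul.
by apply: eq_pdot => v; apply: eq_pdot => y; rewrite monoMA.
Qed.

Lemma pdot_neq0 F p : pdot F p != 0 -> exists2 t, t \in p & F t.2 != 0.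
Proof.
move=> nz; have [/hasP [t tp Ft]|/hasPn F0] := boolP (has (fun t => F t.2 != 0) p).
  by exists t.
move: nz; rewrite /pdot big1_seq ?eqxx // => t /F0; rewrite negbK => /eqP ->.
by rewrite mulr0.
Qed.

End Pairing.

Section NormalForm.
Variables (R : comPzRingType) (n : nat) (beta alpha : R).
Implicit Types (p q : mpoly R n) (m u : mono n) (F : mono n -> R).

Definition triple := ('I_n * 'I_n * 'I_n)%type.
Definition is_fork (t : triple) := (t.1.1 < t.1.2 < t.2)%N.
Definition fork_mono (t : triple) := monoM (mvar t.1.1 t.1.2) (mvar t.1.1 t.2).

(* [gen] solved for its fork x_ij x_ik, where P, Q, S stand for x_ij, x_ik, x_jk. *)
Definition rule_rhs (P Q S : mono n) : mpoly R n :=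
  [:: (1, monoM P S); (-1, monoM Q S); (- beta, Q); (- alpha, mono1 n)].
Definition rule_rel (P Q S : mono n) : mpoly R n := (1, monoM P Q) :: popp (rule_rhs P Q S).

Definition fork_rhs (t : triple) :=
  rule_rhs (mvar t.1.1 t.1.2) (mvar t.1.1 t.2) (mvar t.1.2 t.2).
Definition fork_rel (t : triple) :=
  rule_rel (mvar t.1.1 t.1.2) (mvar t.1.1 t.2) (mvar t.1.2 t.2).

Lemma pdot_fork_rel F t : pdot F (fork_rel t) = F (fork_mono t) - pdot F (fork_rhs t).
Proof. by rewrite pdot_cons pdot_popp mul1r. Qed.

Lemma pdot_gen F t :
  pdot F (gen beta alpha t.1.1 t.1.2 t.2) = - pdot F (fork_rel t).
Proof.
rewrite /gen !pdot_psub !pdot_pmul pdot_fork_rel /fork_rhs /rule_rhs /pX /pconst /padd.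
rewrite ?pdot_cat ?pdot_cons ?pdot_nil /= ?pdot_cat ?pdot_cons ?pdot_nil /= ?pdot_cons ?pdot_nil.
rewrite (monoMC (mvar t.1.1 t.2)) !monoM1; ring.
Qed.

Lemma mweight_fork_mono t : is_fork t -> mweight (fork_mono t) = (2 * (n - t.1.1))%N.
Proof.
case/andP=> ltij ltjk; have ltik := ltn_trans ltij ltjk.
by rewrite mweightM !mweight_mvar //; lia.
Qed.

Lemma mweight_fork_rhs t a :
  is_fork t -> a \in fork_rhs t -> (mweight a.2 < mweight (fork_mono t))%N.
Proof.
move=> ft; have /andP [ltij ltjk] := ft; have ltik := ltn_trans ltij ltjk.
have ltkn := ltn_ord t.2.
rewrite mweight_fork_mono // !inE => /or4P [] /eqP -> /=;
  rewrite ?mweightM ?mweight1 ?mweight_mvar //; lia.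
Qed.

Definition pick_fork m : option triple := [pick t | is_fork t && mdvd (fork_mono t) m].

Lemma pick_forkP m t : pick_fork m = Some t -> is_fork t && mdvd (fork_mono t) m.
Proof. by rewrite /pick_fork; case: pickP => // t' ft' [<-]. Qed.

Lemma pick_fork_None m : pick_fork m = None <-> forkless_mono m.
Proof.
split=> [none v w e ltvw [mv mw]|fm].
  pose t : triple := ((val v).1, (val v).2, (val w).2).
  move: none; rewrite /pick_fork; case: pickP => // /(_ t) /negP; case.
  apply/andP; split; first by rewrite /is_fork /= ltvw andbT (valP v).
  apply/forallP => x; rewrite /fork_mono ffunE !mvarE /=.
  case: andP => [[/eqP e1 /eqP e2]|_]; case: andP => [[/eqP e3 /eqP e4]|_] //=.
  - by rewrite -e2 e4 ltnn in ltvw.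
  - by rewrite (Var_eq e1 e2).
  - by rewrite (Var_eq (etrans e3 e) e4).
case ht: (pick_fork m) => [t|] //; exfalso.
have /andP [/andP [ltij ltjk] /forallP dvd] := pick_forkP ht.
pose v : Var n := exist _ (t.1.1, t.1.2) ltij.
pose w : Var n := exist _ (t.1.1, t.2) (ltn_trans ltij ltjk).
apply: (fm v w) => //; split.
  by have := dvd v; rewrite /fork_mono ffunE !mvarE /= !eqxx /=; lia.
by have := dvd w; rewrite /fork_mono ffunE !mvarE /= !eqxx /=; lia.
Qed.

Definition reduct m t := pmul [:: (1, mdiv m (fork_mono t))] (fork_rhs t).

Lemma mweight_reduct m t a : is_fork t -> mdvd (fork_mono t) m ->
  a \in reduct m t -> (mweight a.2 < mweight m)%N.
Proof.
move=> ft dvd /allpairsP [[x y] [/= xu ya ->]] /=; move: xu; rewrite inE => /eqP -> /=.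
rewrite mweightM -{2}(mdivK dvd) mweightM ltn_add2l.
exact: mweight_fork_rhs.
Qed.

Definition pbind (G : mono n -> mpoly R n) p : mpoly R n :=
  flatten [seq [seq (a.1 * s.1, s.2) | s <- G a.2] | a <- p].

Lemma pdot_pbind F G p : pdot F (pbind G p) = pdot (fun u => pdot F (G u)) p.
Proof.
rewrite pdot_flatten big_map; apply: eq_bigr => a _.
by rewrite /pdot big_map mulr_sumr; apply: eq_bigr => s _; rewrite mulrA.
Qed.

Lemma eq_pbind G G' p : (forall a, a \in p -> peq (G a.2) (G' a.2)) ->
  peq (pbind G p) (pbind G' p).
Proof.
move=> eG; apply/peq_pdot => F; rewrite !pdot_pbind; apply: eq_big_seq => a ap.
by rewrite (pdot_peq _ (eG a ap)).
Qed.

Fixpoint nf_iter (k : nat) m : mpoly R n :=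
  if k is k'.+1 then
    if pick_fork m is Some t then pbind (nf_iter k') (reduct m t) else [:: (1, m)]
  else [:: (1, m)].

Lemma nf_iter_stable m k1 k2 :
  (mweight m < k1)%N -> (mweight m < k2)%N -> peq (nf_iter k1 m) (nf_iter k2 m).
Proof.
elim: k1 k2 m => [|k1 IH] [|k2] m // lt1 lt2 /=.
case ht: (pick_fork m) => [t|] //; apply: eq_pbind => a ra.
have /andP [ft dvd] := pick_forkP ht.
have := mweight_reduct ft dvd ra => lt; apply: IH; lia.
Qed.

Definition nf m := nf_iter (mweight m).+1 m.
Definition pnf p := pbind nf p.

Lemma pdot_pnf F p : pdot F (pnf p) = pdot (fun u => pdot F (nf u)) p.
Proof. exact: pdot_pbind. Qed.

Lemma nf_unfold m :
  peq (nf m) (if pick_fork m is Some t then pnf (reduct m t) else [:: (1, m)]).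
Proof.
rewrite /nf /=; case ht: (pick_fork m) => [t|] //; apply: eq_pbind => a ra.
have /andP [ft dvd] := pick_forkP ht.
have := mweight_reduct ft dvd ra => lt; apply: nf_iter_stable; lia.
Qed.

Lemma nf_iter_forkless k m m' :
  (mweight m < k)%N -> coef (nf_iter k m) m' != 0 -> forkless_mono m'.
Proof.
elim: k m => // k IH m lt /=; case ht: (pick_fork m) => [t|].
  rewrite coef_pdot pdot_pbind => /pdot_neq0 [a ra]; rewrite -coef_pdot.
  have /andP [ft dvd] := pick_forkP ht.
  by apply: IH; have := mweight_reduct ft dvd ra => lt_a; lia.
rewrite coef_pdot pdot_cons pdot_nil mul1r addr0.
by case: (m =P m') => [<- _|_]; [apply/pick_fork_None | rewrite eqxx].
Qed.

Lemma forkless_pnf p : forkless (pnf p).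
Proof.
move=> m; rewrite coef_pdot pdot_pnf => /pdot_neq0 [a _]; rewrite -coef_pdot.
exact: nf_iter_forkless.
Qed.

Lemma nf_forkless m : forkless_mono m -> peq (nf m) [:: (1, m)].
Proof. by move=> /pick_fork_None fm; apply: peq_trans (nf_unfold m) _; rewrite fm. Qed.

Lemma pnf_forkless q : forkless q -> peq (pnf q) q.
Proof.
move=> fq; apply/peq_pdot => F.
rewrite pdot_pnf !(pdot_coef _ q); apply: eq_bigr => u _.
have [->|nz] := eqVneq (coef q u) 0; first by rewrite !mul0r.
by rewrite (pdot_peq _ (nf_forkless (fq u nz))) pdot_cons pdot_nil mul1r addr0.
Qed.

End NormalForm.

Section Resolutions.
Variables (R : comPzRingType) (n : nat) (beta alpha : R).
Implicit Types (F : mono n -> R).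

Definition lcomb (S : seq (R * mono n * mpoly R n)) : mpoly R n :=
  flatten [seq pmul [:: x.1] x.2 | x <- S].

Lemma pdot_lcomb F S :
  pdot F (lcomb S) = \sum_(x <- S) x.1.1 * pdot (fun v => F (monoM x.1.2 v)) x.2.
Proof.
by rewrite pdot_flatten big_map; apply: eq_bigr => [[[c u] p]] _; rewrite pdot_pmul1.
Qed.

(* In the first two identities X1, ..., X6 stand for x_ia, x_ib, x_ic, x_ab, x_ac, x_bc;
   in [resolve_disjoint], X1, X2, X3 and X4, X5, X6 are the variables of two forks. *)
Variables X1 X2 X3 X4 X5 X6 w : mono n.

(* Writing every monomial as [w] times an explicit exponent vector over X1..X6
   makes equal monomials syntactically equal, so that [ring] can treat the
   values of [F] as atoms. *)
Definition mono6 (e1 e2 e3 e4 e5 e6 : nat) : mono n :=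
  [ffun v => e1 * X1 v + e2 * X2 v + e3 * X3 v + e4 * X4 v + e5 * X5 v + e6 * X6 v]%N.

Lemma mono6M e1 e2 e3 e4 e5 e6 f1 f2 f3 f4 f5 f6 :
  monoM (mono6 e1 e2 e3 e4 e5 e6) (mono6 f1 f2 f3 f4 f5 f6) =
  mono6 (Nat.add e1 f1) (Nat.add e2 f2) (Nat.add e3 f3)
        (Nat.add e4 f4) (Nat.add e5 f5) (Nat.add e6 f6).
Proof. by apply/ffunP => v; rewrite !ffunE -!plusE; lia. Qed.

Lemma wmono6M e1 e2 e3 e4 e5 e6 f1 f2 f3 f4 f5 f6 :
  monoM (monoM w (mono6 e1 e2 e3 e4 e5 e6)) (mono6 f1 f2 f3 f4 f5 f6) =
  monoM w (mono6 (Nat.add e1 f1) (Nat.add e2 f2) (Nat.add e3 f3)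
                 (Nat.add e4 f4) (Nat.add e5 f5) (Nat.add e6 f6)).
Proof. by rewrite -monoMA mono6M. Qed.

Lemma mono6E :
  X1 = mono6 1 0 0 0 0 0 /\ X2 = mono6 0 1 0 0 0 0 /\ X3 = mono6 0 0 1 0 0 0 /\
  X4 = mono6 0 0 0 1 0 0 /\ X5 = mono6 0 0 0 0 1 0 /\ X6 = mono6 0 0 0 0 0 1 /\
  mono1 n = mono6 0 0 0 0 0 0.
Proof. by do !split; apply/ffunP => v; rewrite !ffunE !mul0n ?mul1n ?addn0 ?add0n. Qed.

Ltac resolve :=
  rewrite pdot_lcomb !big_cons big_nil !pdot_pmul1 /rule_rel /rule_rhs;
  rewrite !pdot_cons ?pdot_popp ?pdot_cons !pdot_nil /=;
  case: mono6E => -> [-> [-> [-> [-> [-> ->]]]]]; rewrite ?mono6M ?wmono6M; cbn [Nat.add]; ring.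

Local Notation rel := (rule_rel beta alpha).
Local Notation rhs := (rule_rhs beta alpha).

Lemma resolve_iab_iac F :
  pdot F (pmul [:: (1, monoM w X3)] (rhs X1 X2 X4)) =
  pdot F (pmul [:: (1, monoM w X2)] (rhs X1 X3 X5)) +
  pdot F (lcomb [:: (1, monoM w X5, rel X2 X3 X6); (-1, monoM w X4, rel X2 X3 X6);
                   (1, monoM w X4, rel X1 X3 X5); (-1, monoM w X3, rel X4 X5 X6);
                   (-1, monoM w X5, rel X1 X2 X4); (1, monoM w X2, rel X4 X5 X6)]).
Proof. resolve. Qed.

Lemma resolve_iab_ibc F :
  pdot F (pmul [:: (1, monoM w X3)] (rhs X1 X2 X4)) =
  pdot F (pmul [:: (1, monoM w X1)] (rhs X2 X3 X6)) +
  pdot F (lcomb [:: (- beta, monoM w (mono1 n), rel X2 X3 X6);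
                   (-1, monoM w X4, rel X2 X3 X6);
                   (beta, monoM w (mono1 n), rel X1 X3 X5); (1, monoM w X6, rel X1 X3 X5);
                   (1, monoM w X4, rel X1 X3 X5); (-1, monoM w X3, rel X4 X5 X6);
                   (1, monoM w X1, rel X4 X5 X6); (-1, monoM w X6, rel X1 X2 X4)]).
Proof. resolve. Qed.

Lemma resolve_disjoint F :
  pdot F (pmul [:: (1, monoM w (monoM X4 X5))] (rhs X1 X2 X3)) =
  pdot F (pmul [:: (1, monoM w (monoM X1 X2))] (rhs X4 X5 X6)) +
  pdot F (lcomb [:: (1, monoM w (monoM X1 X3), rel X4 X5 X6);
                   (-1, monoM w (monoM X2 X3), rel X4 X5 X6);
                   (- beta, monoM w X2, rel X4 X5 X6);
                   (- alpha, monoM w (mono1 n), rel X4 X5 X6);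
                   (-1, monoM w (monoM X4 X6), rel X1 X2 X3);
                   (1, monoM w (monoM X5 X6), rel X1 X2 X3);
                   (beta, monoM w X5, rel X1 X2 X3);
                   (alpha, monoM w (mono1 n), rel X1 X2 X3)]).
Proof. resolve. Qed.

End Resolutions.

Section Confluence.
Variables (R : comPzRingType) (n : nat) (beta alpha : R).
Implicit Types (m u : mono n) (t : triple n) (F : mono n -> R).

Local Notation reduct := (reduct beta alpha).
Local Notation nf := (nf beta alpha).
Local Notation pnf := (pnf beta alpha).

Definition reduct_invariant m :=
  forall t, is_fork t -> mdvd (fork_mono t) m -> peq (nf m) (pnf (reduct m t)).

Definition joinable m t t' := peq (pnf (reduct m t)) (pnf (reduct m t')).

Lemma reduct_cofactor m u t :
  monoM u (fork_mono t) = m -> reduct m t = pmul [:: (1, u)] (fork_rhs beta alpha t).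
Proof. by move=> <-; rewrite /reduct mdiv_monoM. Qed.

Lemma pdot_nf_fork_rel F u t : is_fork t -> reduct_invariant (monoM u (fork_mono t)) ->
  pdot (fun v => pdot F (nf (monoM u v))) (fork_rel beta alpha t) = 0.
Proof.
move=> ft /(_ t ft (mdvd_monoM u _)) /(pdot_peq F).
by rewrite (reduct_cofactor erefl) pdot_pnf pdot_pmul1 mul1r pdot_fork_rel => ->; rewrite subrr.
Qed.

Definition lower_rels W (S : seq (R * mono n * mpoly R n)) :=
  forall x, x \in S -> exists2 t, is_fork t &
    x.2 = fork_rel beta alpha t /\ (mweight (monoM x.1.2 (fork_mono t)) < W)%N.

Section Lower.
Variable W : nat.
Hypothesis invW : forall m, (mweight m < W)%N -> reduct_invariant m.

Lemma pnf_lcomb S F : lower_rels W S -> pdot F (pnf (lcomb S)) = 0.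
Proof.
move=> lowS; rewrite pdot_pnf pdot_lcomb big1_seq // => x xS.
have [t ft [-> ltW]] := lowS x xS.
by rewrite pdot_nf_fork_rel ?mulr0 //; apply: invW.
Qed.

Lemma pnf_eq_lcomb p q S : lower_rels W S ->
  (forall F, pdot F p = pdot F q + pdot F (lcomb S)) -> peq (pnf p) (pnf q).
Proof.
move=> lowS epq; apply/peq_pdot => F.
by rewrite !pdot_pnf epq -[pdot _ (lcomb S)]pdot_pnf pnf_lcomb // addr0.
Qed.

End Lower.

Definition disjoint_forks (c f : triple n) :=
  c.1.1 <> f.1.1 :> nat \/ (c.1.2 <> f.1.2 :> nat /\ c.1.2 <> f.2 :> nat /\
                            c.2 <> f.1.2 :> nat /\ c.2 <> f.2 :> nat).

Lemma mdvd_disjoint_forks m (c f : triple n) : is_fork c -> is_fork f ->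
  mdvd (fork_mono c) m -> mdvd (fork_mono f) m -> disjoint_forks c f ->
  mdvd (monoM (fork_mono c) (fork_mono f)) m.
Proof.
case: c f => [[i0 j0] k0] [[i j] k] /andP [/= lt1 lt2] /andP [/= lt3 lt4] /forallP dc /forallP df.
rewrite /disjoint_forks /= => disj; apply/forallP => v; move: (dc v) (df v).
have := mvar_le1 i0 j0 v; have := mvar_le1 i0 k0 v.
have := mvar_le1 i j v; have := mvar_le1 i k v.
have := @mvar_disjoint _ i0 j0 i0 k0 v ltac:(lia); have := @mvar_disjoint _ i j i k v ltac:(lia).
have := @mvar_disjoint _ i0 j0 i j v ltac:(lia); have := @mvar_disjoint _ i0 j0 i k v ltac:(lia).
have := @mvar_disjoint _ i0 k0 i j v ltac:(lia); have := @mvar_disjoint _ i0 k0 i k v ltac:(lia).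
by rewrite /fork_mono /= !ffunE; lia.
Qed.

Lemma mdvd_fan m (i a b c : 'I_n) t t' : (a < b)%N -> (b < c)%N ->
  t \in [:: (i, a, b); (i, a, c); (i, b, c)] -> t' \in [:: (i, a, b); (i, a, c); (i, b, c)] ->
  t != t' -> mdvd (fork_mono t) m -> mdvd (fork_mono t') m ->
  mdvd (monoM (monoM (mvar i a) (mvar i b)) (mvar i c)) m.
Proof.
move=> lt_ab lt_bc tF t'F ne /forallP dt /forallP dt'; apply/forallP => v.
move: (dt v) (dt' v); have lt_ac := ltn_trans lt_ab lt_bc.
have := mvar_le1 i a v; have := mvar_le1 i b v; have := mvar_le1 i c v.
have := @mvar_disjoint _ i a i b v ltac:(lia); have := @mvar_disjoint _ i a i c v ltac:(lia).
have := @mvar_disjoint _ i b i c v ltac:(lia).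
move: tF t'F ne; rewrite !inE => /or3P [] /eqP -> /or3P [] /eqP ->; rewrite ?eqxx //= => _;
  by rewrite /fork_mono /= !ffunE; lia.
Qed.

Ltac lower_rels_by hm t1 t2 t3 t4 :=
  let by_fork t := (exists t; [by apply/andP | split; [reflexivity |
        rewrite -hm /fork_mono /= !mweightM ?mweight1 !mweight_mvar //; lia]]) in
  move=> ?; repeat case/predU1P => [->|]; last by [];
  first [by_fork t1 | by_fork t2 | by_fork t3 | by_fork t4].

Section Overlaps.
Variable m : mono n.
Hypothesis inv_lt : forall m', (mweight m' < mweight m)%N -> reduct_invariant m'.

Lemma joinable_disjoint (c f : triple n) : is_fork c -> is_fork f ->
  mdvd (fork_mono c) m -> mdvd (fork_mono f) m -> disjoint_forks c f -> joinable m c f.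
Proof.
move=> fc ff dc df disj; have dvd := mdvd_disjoint_forks fc ff dc df disj.
move: c f fc ff {dc df} disj dvd => [[i0 j0] k0] [[i j] k] /andP [/= lt1 lt2] /andP [/= lt3 lt4] _.
have ltk0 := ltn_ord k0; have ltk := ltn_ord k.
move=> dvd; have hm := mdivK dvd; set w := mdiv m _ in hm.
rewrite /joinable (@reduct_cofactor _ (monoM w (fork_mono (i, j, k)))); last first.
  by rewrite -hm; apply/ffunP => v; rewrite !ffunE; lia.
rewrite (@reduct_cofactor _ (monoM w (fork_mono (i0, j0, k0)))); last first.
  by rewrite -hm; apply/ffunP => v; rewrite !ffunE; lia.
apply: (pnf_eq_lcomb inv_lt _ (resolve_disjoint beta alpha (mvar i0 j0) (mvar i0 k0)
          (mvar j0 k0) (mvar i j) (mvar i k) (mvar j k) w)).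
lower_rels_by hm (i, j, k) (i0, j0, k0) (i, j, k) (i, j, k).
Qed.

Lemma joinable_fan (i a b c : 'I_n) t t' : (i < a)%N -> (a < b)%N -> (b < c)%N ->
  t \in [:: (i, a, b); (i, a, c); (i, b, c)] -> t' \in [:: (i, a, b); (i, a, c); (i, b, c)] ->
  mdvd (fork_mono t) m -> mdvd (fork_mono t') m -> joinable m t t'.
Proof.
move=> lt_ia lt_ab lt_bc tF t'F dt dt'.
have [<-|ne] := eqVneq t t'; first by move=> ?.
have lt_ib := ltn_trans lt_ia lt_ab; have lt_ac := ltn_trans lt_ab lt_bc.
have lt_ic := ltn_trans lt_ib lt_bc; have ltc := ltn_ord c.
have dvd := mdvd_fan lt_ab lt_bc tF t'F ne dt dt'.
have hm := mdivK dvd; set w := mdiv m _ in hm.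
have red_ab : reduct m (i, a, b) = pmul [:: (1, monoM w (mvar i c))] (fork_rhs beta alpha (i, a, b)).
  by apply: reduct_cofactor; rewrite -hm /fork_mono /=; apply/ffunP => v; rewrite !ffunE; lia.
have red_ac : reduct m (i, a, c) = pmul [:: (1, monoM w (mvar i b))] (fork_rhs beta alpha (i, a, c)).
  by apply: reduct_cofactor; rewrite -hm /fork_mono /=; apply/ffunP => v; rewrite !ffunE; lia.
have red_bc : reduct m (i, b, c) = pmul [:: (1, monoM w (mvar i a))] (fork_rhs beta alpha (i, b, c)).
  by apply: reduct_cofactor; rewrite -hm /fork_mono /=; apply/ffunP => v; rewrite !ffunE; lia.
have j_ac : joinable m (i, a, b) (i, a, c).
  rewrite /joinable red_ab red_ac.
  apply: (pnf_eq_lcomb inv_lt _ (resolve_iab_iac beta alpha (mvar i a) (mvar i b)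
            (mvar i c) (mvar a b) (mvar a c) (mvar b c) w)).
  lower_rels_by hm (i, a, b) (i, a, c) (i, b, c) (a, b, c).
have j_bc : joinable m (i, a, b) (i, b, c).
  rewrite /joinable red_ab red_bc.
  apply: (pnf_eq_lcomb inv_lt _ (resolve_iab_ibc beta alpha (mvar i a) (mvar i b)
            (mvar i c) (mvar a b) (mvar a c) (mvar b c) w)).
  lower_rels_by hm (i, a, b) (i, a, c) (i, b, c) (a, b, c).
move: tF t'F; rewrite !inE => /or3P [] /eqP -> /or3P [] /eqP ->;
  by [ move=> ? | exact: j_ac | exact: j_bc | exact: peq_sym j_ac | exact: peq_sym j_bc
     | exact: peq_trans (peq_sym j_ac) j_bc | exact: peq_trans (peq_sym j_bc) j_ac ].
Qed.

Lemma joinable_forks (c f : triple n) : is_fork c -> is_fork f ->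
  mdvd (fork_mono c) m -> mdvd (fork_mono f) m -> joinable m c f.
Proof.
move=> fc ff dc df.
have [disj|] := boolP [|| c.1.1 != f.1.1 :> nat |
  [&& c.1.2 != f.1.2 :> nat, c.1.2 != f.2 :> nat, c.2 != f.1.2 :> nat & c.2 != f.2 :> nat]].
  apply: joinable_disjoint => //.
  by case/orP: disj => [/eqP|/and4P [/eqP ? /eqP ? /eqP ? /eqP ?]]; [left | right].
move: c f fc ff dc df => [[i0 j0] k0] [[i j] k] /andP [/= lt1 lt2] /andP [/= lt3 lt4] dc df /=.
rewrite negb_or negbK => /andP [/eqP/val_inj ei shared]; subst i0.
have [/val_inj e|ne_jj] := eqVneq (j0 : nat) j.
  subst j0; case: (ltngtP k0 k) => [lt|lt|/val_inj <-]; last by move=> ?.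
    by apply: (@joinable_fan i j k0 k); rewrite // !inE eqxx ?orbT.
  by apply: (@joinable_fan i j k k0); rewrite // !inE eqxx ?orbT.
have [/val_inj e|ne_jk] := eqVneq (j0 : nat) k.
  by subst j0; apply: (@joinable_fan i j k k0); rewrite // !inE eqxx ?orbT.
have [/val_inj e|ne_kj] := eqVneq (k0 : nat) j.
  by subst k0; apply: (@joinable_fan i j0 j k); rewrite // !inE eqxx ?orbT.
move: shared; rewrite ne_jj ne_jk ne_kj /= negbK => /eqP/val_inj e; subst k0.
case: (ltngtP j0 j) => [lt|lt|e]; last by case/eqP: ne_jj.
  by apply: (@joinable_fan i j0 j k); rewrite // !inE eqxx ?orbT.
by apply: (@joinable_fan i j j0 k); rewrite // !inE eqxx ?orbT.
Qed.

End Overlaps.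

Lemma reduct_invariantP m : reduct_invariant m.
Proof.
have [W] := ubnP (mweight m); elim: W m => // W IH m ltmW t ft dt.
have inv_lt m' : (mweight m' < mweight m)%N -> reduct_invariant m'.
  by move=> lt; apply: IH; lia.
apply: peq_trans (nf_unfold beta alpha m) _.
case hp: (pick_fork m) => [c|].
  by have /andP [fc dc] := pick_forkP hp; exact (joinable_forks inv_lt fc ft dc dt).
by move: hp; rewrite /pick_fork; case: pickP => // /(_ t); rewrite ft dt.
Qed.

End Confluence.

Section Ideal.
Variables (R : comPzRingType) (n : nat) (beta alpha : R).
Implicit Types (p q f g h : mpoly R n) (m u : mono n) (F : mono n -> R).

Local Notation inJ := (inJ beta alpha).
Local Notation nf := (nf beta alpha).
Local Notation pnf := (pnf beta alpha).

Lemma inJ_peq f g : peq f g -> inJ f -> inJ g.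
Proof. by move=> efg [s [forks ef]]; exists s; split => // m; rewrite -efg. Qed.

Lemma inJ_nil : inJ (Nil (R * mono n)).
Proof. by exists [::]; split. Qed.

Lemma inJ_padd f g : inJ f -> inJ g -> inJ (padd f g).
Proof.
move=> [s1 [forks1 ef]] [s2 [forks2 eg]]; exists (s1 ++ s2); split.
  by move=> t; rewrite mem_cat => /orP [/forks1|/forks2].
apply/peq_pdot => F.
by rewrite map_cat flatten_cat !pdot_cat (pdot_peq F ef) (pdot_peq F eg).
Qed.

Lemma inJ_pmul h f : inJ f -> inJ (pmul h f).
Proof.
case=> s [forks ef]; exists [seq (pmul h t.1, t.2) | t <- s]; split.
  by move=> t /mapP [x xs ->]; apply: forks xs.
apply/peq_pdot => F; rewrite pdot_pmul pdot_flatten -map_comp big_map.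
under eq_pdot => u do rewrite (pdot_peq _ ef) pdot_flatten big_map.
by rewrite pdot_sum; apply: eq_bigr => t _; rewrite -pdot_pmul pdot_pmulA.
Qed.

Lemma inJ_fork_rel h t : is_fork t -> inJ (pmul h (fork_rel beta alpha t)).
Proof.
move=> ft; exists [:: (popp h, t)]; split; first by move=> x; rewrite inE => /eqP ->.
apply/peq_pdot => F; rewrite /= cats0 !pdot_pmul pdot_popp.
by rewrite -pdotN; apply: eq_pdot => u; rewrite pdot_gen opprK.
Qed.

Lemma pnf_inJ F f : inJ f -> pdot F (pnf f) = 0.
Proof.
case=> s [forks ef]; rewrite pdot_pnf (pdot_peq _ ef) pdot_flatten big_map big1_seq //.
move=> t /andP [_ ts]; rewrite pdot_pmul {1}/pdot big1 // => a _.
rewrite pdot_gen pdot_nf_fork_rel ?oppr0 ?mulr0 //; [exact: forks ts | exact: reduct_invariantP].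
Qed.

Lemma pnf_eq_of_inJ p q : inJ (psub p q) -> peq (pnf p) (pnf q).
Proof.
move=> J; apply/peq_pdot => F; apply/eqP; rewrite -subr_eq0.
by rewrite -(pnf_inJ F J) !pdot_pnf pdot_psub.
Qed.

Lemma inJ_sub_pnf_of p :
  (forall a, a \in p -> inJ (psub [:: (1, a.2)] (nf a.2))) -> inJ (psub p (pnf p)).
Proof.
elim: p => [_|a p IH Ja].
  by apply: inJ_peq inJ_nil; apply/peq_pdot => F; rewrite pdot_psub pdot_pnf !pdot_nil subr0.
have J1 := inJ_pmul [:: (a.1, mono1 n)] (Ja a (mem_head _ _)).
have J2 := IH (fun b bp => Ja b (@mem_behead _ (a :: p) _ bp)).
apply: inJ_peq (inJ_padd J1 J2); apply/peq_pdot => F.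
rewrite pdot_cat !pdot_psub pdot_pmul1 pdot_psub !pdot_pnf !pdot_cons pdot_nil.
under eq_pdot => v do rewrite mono1M.
by rewrite mono1M /=; ring.
Qed.

Lemma inJ_sub_nf m : inJ (psub [:: (1, m)] (nf m)).
Proof.
have [W] := ubnP (mweight m); elim: W m => // W IH m ltmW.
have unf := nf_unfold beta alpha m.
case hp: (pick_fork m) unf => [c|] unf; last first.
  apply: inJ_peq inJ_nil; apply/peq_pdot => F.
  by rewrite pdot_psub (pdot_peq F unf) subrr pdot_nil.
have /andP [fc dc] := pick_forkP hp; set u := mdiv m (fork_mono c).
have Jrel := inJ_fork_rel [:: (1, u)] fc.
have Jred : inJ (psub (reduct beta alpha m c) (pnf (reduct beta alpha m c))).
  apply: inJ_sub_pnf_of => a ra; apply: IH.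
  by have := mweight_reduct fc dc ra; lia.
apply: inJ_peq (inJ_padd Jrel Jred); apply/peq_pdot => F.
rewrite pdot_cat !pdot_psub pdot_pmul1 pdot_fork_rel (pdot_peq F unf) /reduct -/u.
rewrite pdot_pmul1 !pdot_cons !pdot_nil mdivK //=; ring.
Qed.

Lemma inJ_sub_pnf p : inJ (psub p (pnf p)).
Proof. by apply: inJ_sub_pnf_of => a _; apply: inJ_sub_nf. Qed.

End Ideal.

Unset Implicit Arguments.

Theorem theorem4p3 (R : comPzRingType) (beta alpha : R) (n : nat) (npos : (0 < n)%N)
    (p : mpoly R n) :
  exists q : mpoly R n,
    [/\ forkless q, inJ beta alpha (psub p q) &
        forall q' : mpoly R n, forkless q' -> inJ beta alpha (psub p q') -> peq q' q].
Proof.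
exists (pnf beta alpha p); split; [exact: forkless_pnf | exact: inJ_sub_pnf |].
move=> q' fq' Jq'; apply: peq_trans (peq_sym (pnf_forkless beta alpha fq')) _.
exact: peq_sym (pnf_eq_of_inJ Jq').
Qed.
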